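(* Let $f$ satisfy conditions (1) and (2b), and let $n\in\mathbb{N}_0$. Then the series \[ \sum_{k=0}^\infty(-1)^k\frac{p^k}{k!}\,c_{n+2k} \] is absolutely and uniformly convergent for all $p\in[0,\infty)$.
   Context: $f:[0,\infty)\to\mathbb{R}$; $c_n=2\pi\int_0^\infty f(r)\,r^{n+1}dr$. Condition (1): there is a constant $F$ with $0\le f(r)\le F$ for all $r\ge0$, $c_0$ exists and $c_0>0$. Condition (2b): $c_{2n}$ exists for all $n\in\mathbb{N}_0$ and $c_n^{1/n}=o(n^{1/2})$ as $n\to\infty$. *)

From HB Require Import structures.
From mathcomp Require Import all_boot all_order all_algebra.
From mathcomp Require Import all_classical all_reals all_analysis.
Set Implicit Arguments. Unset Strict Implicit. Unset Printing Implicit Defensive.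
Import Order.TTheory GRing.Theory Num.Theory.
Import numFieldNormedType.Exports.
Local Open Scope classical_set_scope.
Local Open Scope ring_scope.

Section Moments.
Variable R : realType.

Definition cmom_exists (f : R -> R) (n : nat) : Prop :=
  (@lebesgue_measure R).-integrable `[0%R, +oo[%classic
     (fun r => (f r * r ^+ n.+1)%:E).

Definition cmom (f : R -> R) (n : nat) : R :=
  2 * pi * Rintegral (@lebesgue_measure R) `[0%R, +oo[%classic
     (fun r => f r * r ^+ n.+1).

Definition cond1 (f : R -> R) : Prop :=
  (exists F : R, forall r : R, 0 <= r -> 0 <= f r <= F) /\
  cmom_exists f 0 /\ 0 < cmom f 0.

Definition cond2b (f : R -> R) : Prop :=
  (forall n : nat, cmom_exists f (2 * n)) /\
  (forall eps : R, 0 < eps -> exists N : nat, forall m : nat, (N <= m)%N ->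
     powR (cmom f m) (m%:R^-1) <= eps * Num.sqrt (m%:R)).

Definition mterm (f : R -> R) (n : nat) (p : R) (k : nat) : R :=
  (-1) ^+ k * p ^+ k / (k`!)%:R * cmom f (n + 2 * k).

Definition mpartial (f : R -> R) (n : nat) (p : R) (N : nat) : R :=
  \sum_(0 <= k < N) mterm f n p k.

End Moments.

(* Only the nonnegativity of f from (1) is used.  For m = n + 2k one has
   m^m <= n^n (e^2 (n+2)^2)^k (k!)^2, and by (2b) eventually
   c_m <= (eps sqrt m)^m, i.e. c_m^2 <= (eps^2 m)^m.  Hence
   (p^k c_m / k!)^2 <= n^n (p^2 e^2 (n+2)^2 eps^4)^k, which is at most
   n^n 4^-k once eps is small: the terms are eventually dominated by a
   geometric series, so the series converges absolutely.  As |term_k| grows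
   with p, the absolute series at P is a summable majorant on [0, P], and the
   Weierstrass M-test gives uniform convergence there. *)

From HB Require Import structures.
From mathcomp Require Import all_boot all_order all_algebra.
From mathcomp Require Import all_classical all_reals all_analysis.
From mathcomp Require Import ring lra zify.
Import Order.TTheory GRing.Theory Num.Theory.
Import numFieldNormedType.Exports.
Local Open Scope classical_set_scope.
Local Open Scope ring_scope.

Section SeriesComparison.
Context {R : realType}.
Implicit Types u v M : R ^nat.

Lemma series_le_cvg_eventually {u v K} :
  (forall k, 0 <= u k) -> (forall k, 0 <= v k) ->
  (forall k, (K <= k)%N -> u k <= v k) ->
  cvgn (series v) -> cvgn (series u).
Proof.
move=> u_ge0 v_ge0 le_uv cv.
pose uK k := if (K <= k)%N then u k else 0.
have cuK : cvgn (series uK).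
  apply: (series_le_cvg _ v_ge0 _ cv) => k; rewrite /uK; case: ifPn => // Kk.
  exact: le_uv.
rewrite -(is_cvg_series_restrict K) -(is_cvg_series_restrict K) in cuK *.
suff -> : [sequence \sum_(K <= k < N) u k]_N = [sequence \sum_(K <= k < N) uK k]_N by [].
by apply/funext => N /=; apply: eq_big_nat => k /andP[Kk _]; rewrite /uK Kk.
Qed.

Lemma normr_lim_series_sub_le {u M} N :
  (forall k, `|u k| <= M k) -> cvgn (series M) ->
  `|limn (series u) - series u N| <= limn (series M) - series M N.
Proof.
move=> uM cM.
have M_ge0 k : 0 <= M k := le_trans (normr_ge0 _) (uM k).
have cu : cvgn (series u).
  apply: normed_cvg; apply: (series_le_cvg _ M_ge0 uM cM) => k; exact: normr_ge0.
have cvN : (fun N' => `|series u N' - series u N|) @ \oo -->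
    `|limn (series u) - series u N|.
  by apply: cvg_norm; apply: cvgB => //; exact: cvg_cst.
rewrite -(cvg_lim _ cvN) //; apply: limr_le; first by apply/cvg_ex; eexists; exact: cvN.
exists N => // N' /= NN'.
rewrite sub_series_geq //; apply: le_trans (ler_norm_sum _ _ _) _.
apply: le_trans (_ : \sum_(N <= k < N') M k <= _); first exact: ler_sum.
rewrite -sub_series_geq // lerD2r; apply: (nondecreasing_cvgn_le _ cM).
by apply: nondecreasing_series => k _ _; exact: M_ge0.
Qed.

Lemma series_unif_cvg_Mtest (T : Type) (D : set T) (u : T -> R ^nat) M :
  (forall x k, D x -> `|u x k| <= M k) -> cvgn (series M) ->
  exists S : T -> R, forall eps, 0 < eps -> exists N0, forall N, (N0 <= N)%N ->
    forall x, D x -> `|series (u x) N - S x| < eps.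
Proof.
move=> uM cM; exists (fun x => limn (series (u x))) => eps eps_gt0.
have /cvgrPdist_lt/(_ _ eps_gt0)[N0 _ tail_lt] := cM.
exists N0 => N N0N x Dx; rewrite distrC.
apply: le_lt_trans (normr_lim_series_sub_le N (uM x ^~ Dx) cM) _.
exact: le_lt_trans (ler_norm _) (tail_lt N N0N).
Qed.
End SeriesComparison.

Lemma natrD2_exprn_le (R : realType) (m : nat) :
  ((m + 2)%:R : R) ^+ m <= expR 2 * m%:R ^+ m.
Proof.
case: m => [|m]; first by rewrite !expr0 mulr1; have := expR_ge1Dx (2 : R); lra.
set M : R := m.+1%:R.
have M_gt0 : 0 < M by rewrite ltr0n.
have -> : ((m.+1 + 2)%:R : R) = (1 + 2 / M) * M.
  by rewrite mulrDl mul1r divfK ?gt_eqF // natrD.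
have -> : (expR 2 : R) = expR (2 / M) ^+ m.+1.
  by rewrite -expRM_natr mulrAC -mulrA divff ?gt_eqF // mulr1.
rewrite exprMn ler_wpM2r ?exprn_ge0 ?(ltW M_gt0) //.
apply: lerXn2r; rewrite ?nnegrE ?expR_ge0 ?expR_ge1Dx //.
by rewrite addr_ge0 ?divr_ge0 ?(ltW M_gt0).
Qed.

Lemma natr_self_exprn_le (R : realType) (n k : nat) :
  ((n + 2 * k)%:R : R) ^+ (n + 2 * k) <=
  n%:R ^+ n * (expR 2 * (n + 2)%:R ^+ 2) ^+ k * (k`!)%:R ^+ 2.
Proof.
elim: k => [|k IH]; first by rewrite muln0 addn0 mulr1 fact0 expr1n mulr1.
set m := (n + 2 * k)%N in IH *.
have -> : (n + 2 * k.+1 = m + 2)%N by rewrite /m; lia.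
have step : ((m + 2)%:R : R) ^+ 2 <= (n + 2)%:R ^+ 2 * k.+1%:R ^+ 2.
  by rewrite -exprMn -natrM lerXn2r ?nnegrE ?ler0n // ler_nat /m; nia.
have head : ((m + 2)%:R : R) ^+ m <=
    expR 2 * (n%:R ^+ n * (expR 2 * (n + 2)%:R ^+ 2) ^+ k * (k`!)%:R ^+ 2).
  exact: le_trans (natrD2_exprn_le R m) (ler_wpM2l (expR_ge0 2) IH).
rewrite exprD; apply: le_trans (ler_pM _ _ head step) _; rewrite ?exprn_ge0 //.
by rewrite factS natrM (exprSr (expR 2 * _) k) le_eqVlt; apply/orP; left; apply/eqP; ring.
Qed.

Lemma powR_invn_le (R : realType) (a b : R) (m : nat) :
  0 <= a -> (0 < m)%N -> a `^ m%:R^-1 <= b -> a <= b ^+ m.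
Proof.
move=> a_ge0 m_gt0 le_ab.
have -> : a = (a `^ m%:R^-1) ^+ m.
  by rewrite -powR_mulrn ?powR_ge0 // -powRrM mulVf ?pnatr_eq0 -?lt0n // powRr1.
by apply: lerXn2r; rewrite ?nnegrE ?powR_ge0 // (le_trans (powR_ge0 _ _) le_ab).
Qed.

Lemma exists_small_scale {R : realFieldType} (x : R) : 0 <= x ->
  exists e, [/\ 0 < e, e <= 1 & x * e ^+ 4 <= 4^-1].
Proof.
move=> x_ge0; set e := (4 * (1 + x))^-1.
have e_gt0 : 0 < e by rewrite invr_gt0 mulr_gt0 //; lra.
have eE : e * (4 * (1 + x)) = 1 by rewrite mulVf ?gt_eqF // mulr_gt0 //; lra.
have e_le1 : e <= 1 by nra.
exists e; split => //.
apply: le_trans (_ : x * e <= _); last by nra.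
by rewrite ler_wpM2l // -[leRHS]expr1 ler_wiXn2l // ltW.
Qed.

Section MomentSeries.
Variables (R : realType) (f : R -> R) (n : nat).
Hypothesis f_ge0 : forall r, 0 <= r -> 0 <= f r.

Lemma cmom_ge0 m : 0 <= cmom f m.
Proof.
rewrite /cmom !mulr_ge0 ?pi_ge0 //; apply: Rintegral_ge0 => r.
by rewrite /= in_itv /= andbT => r_ge0; rewrite mulr_ge0 ?f_ge0 ?exprn_ge0.
Qed.

Lemma normr_mterm p k : 0 <= p ->
  `|mterm f n p k| = p ^+ k / (k`!)%:R * cmom f (n + 2 * k).
Proof.
move=> p_ge0; rewrite /mterm -!mulrA normrM normrX normrN1 expr1n mul1r mulrA.
by rewrite ger0_norm // mulr_ge0 ?cmom_ge0 ?divr_ge0 ?exprn_ge0.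
Qed.

Lemma normr_mterm_le p P k : 0 <= p <= P -> `|mterm f n p k| <= `|mterm f n P k|.
Proof.
move=> /andP[p_ge0 pP]; have P_ge0 := le_trans p_ge0 pP.
rewrite !normr_mterm // ler_wpM2r ?cmom_ge0 // ler_wpM2r ?invr_ge0 //.
by apply: lerXn2r; rewrite ?nnegrE.
Qed.

Let B : R := expR 2 * (n + 2)%:R ^+ 2.

Lemma normr_mterm_sqr_le {p e k} : 0 <= p -> 0 <= e -> e <= 1 ->
  cmom f (n + 2 * k) <= (e * Num.sqrt (n + 2 * k)%:R) ^+ (n + 2 * k) ->
  `|mterm f n p k| ^+ 2 <= n%:R ^+ n * (p ^+ 2 * B * e ^+ 4) ^+ k.
Proof.
move=> p_ge0 e_ge0 e_le1; set m := (n + 2 * k)%N => cm_le.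
have G_gt0 : 0 < (k`!)%:R ^+ 2 :> R by rewrite exprn_gt0 // ltr0n fact_gt0.
have cm_sqr : cmom f m ^+ 2 <= e ^+ (4 * k) * (n%:R ^+ n * B ^+ k * (k`!)%:R ^+ 2).
  apply: le_trans (_ : (e ^+ 2 * m%:R) ^+ m <= _).
    rewrite -[e ^+ 2 * _]sqr_sqrtr ?mulr_ge0 ?exprn_ge0 // sqrtrM ?exprn_ge0 //.
    rewrite sqrtr_sqr ger0_norm // -exprM mulnC exprM.
    by rewrite lerXn2r ?nnegrE ?cmom_ge0 ?exprn_ge0 ?mulr_ge0 ?sqrtr_ge0.
  rewrite exprMn -exprM ler_pM ?exprn_ge0 ?natr_self_exprn_le //.
  by rewrite ler_wiXn2l // /m; lia.
rewrite normr_mterm // exprMn exprMn exprVn mulrAC ler_pdivrMr //.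
apply: le_trans (ler_wpM2l (exprn_ge0 _ (exprn_ge0 _ p_ge0)) cm_sqr) _.
rewrite (exprMn _ (p ^+ 2 * B)) (exprMn _ (p ^+ 2)) -!exprM (mulnC 2 k).
by rewrite le_eqVlt; apply/orP; left; apply/eqP; ring.
Qed.

Lemma normr_mterm_le_geometric {p} : cond2b f -> 0 <= p ->
  exists2 C, 0 <= C & exists K, forall k, (K <= k)%N ->
    `|mterm f n p k| <= geometric C 2^-1 k.
Proof.
move=> [_ cmom_small] p_ge0.
have B_ge0 : 0 <= B by rewrite mulr_ge0 ?expR_ge0 ?exprn_ge0.
have [e [e_gt0 e_le1 q_le]] := exists_small_scale _ (mulr_ge0 (exprn_ge0 2 p_ge0) B_ge0).
have e_ge0 := ltW e_gt0.
have [N cmomN] := cmom_small e e_gt0.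
exists (n%:R ^+ n + 1); first by rewrite addr_ge0 ?exprn_ge0.
exists N.+1 => k Nk; rewrite /geometric /=.
have cm_le : cmom f (n + 2 * k) <= (e * Num.sqrt (n + 2 * k)%:R) ^+ (n + 2 * k).
  by apply: powR_invn_le; rewrite ?cmom_ge0 ?cmomN //; lia.
have C_ge0 : 0 <= n%:R ^+ n + 1 :> R by rewrite addr_ge0 ?exprn_ge0.
rewrite -(@ler_pXn2r _ 2) ?nnegrE ?mulr_ge0 ?exprn_ge0 //.
apply: le_trans (normr_mterm_sqr_le p_ge0 e_ge0 e_le1 cm_le) _.
have -> : ((n%:R ^+ n + 1) * 2^-1 ^+ k) ^+ 2 = (n%:R ^+ n + 1) ^+ 2 * 4^-1 ^+ k :> R.
  have quarter : (2^-1 : R) ^+ 2 = 4^-1 by rewrite exprVn -natrX.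
  by rewrite exprMn -exprM mulnC exprM quarter.
apply: ler_pM; rewrite ?exprn_ge0 ?mulr_ge0 //.
  by have := exprn_ge0 n (ler0n R n); nra.
by apply: lerXn2r; rewrite ?nnegrE ?mulr_ge0 ?exprn_ge0 ?invr_ge0.
Qed.

Lemma cvg_series_normr_mterm {p} : cond2b f -> 0 <= p ->
  cvgn (series (fun k => `|mterm f n p k|)).
Proof.
move=> c2b p_ge0; have [C C_ge0 [K le_geo]] := normr_mterm_le_geometric c2b p_ge0.
apply: (series_le_cvg_eventually _ _ le_geo) => [k | k |]; first exact: normr_ge0.
  exact: geometric_ge0.
by apply: is_cvg_geometric_series; rewrite ger0_norm ?invf_lt1 ?ltr1n.
Qed.
End MomentSeries.

Theorem lemma8 (R : realType) (f : R -> R) (n : nat) :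
  cond1 f -> cond2b f ->
  (* absolute convergence for every p >= 0 *)
  (forall p : R, 0 <= p ->
     exists l : R,
       (fun N : nat => \sum_(0 <= k < N) `|mterm f n p k|) @ \oo --> l) /\
  (* uniform convergence on every bounded interval [0, P] *)
  (forall P : R, 0 <= P ->
     exists S : R -> R, forall eps : R, 0 < eps ->
       exists N0 : nat, forall N : nat, (N0 <= N)%N ->
         forall p : R, 0 <= p <= P -> `|mpartial f n p N - S p| < eps).
Proof.
move=> [[F f_bound] _] c2b.
have f_ge0 r : 0 <= r -> 0 <= f r by move=> /f_bound /andP[].
split=> [p p_ge0 | P P_ge0].
  exists (limn (series (fun k => `|mterm f n p k|))).
  exact: cvg_series_normr_mterm.
apply: (@series_unif_cvg_Mtest _ _ [set p | 0 <= p <= P]).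
  by move=> p k; exact: normr_mterm_le.
exact: cvg_series_normr_mterm.
Qed.
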